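(* Let $\tau$ be a primitive substitution prolongable on a letter $a$ and $\mathbf{x}=\tau^\omega(a)$. If $\tau_2$ is ultimately Pisot, then for each $k\ge1$ the $k$-abelian complexity $(\rho^k_{\mathbf{x}}(n))_{n\ge0}$ is bounded.
   Context: $u\sim_k v$ if $|u|_w=|v|_w$ for all words $w$ of length at most $k$; $\rho^k_{\mathbf{x}}(n)$ is the number of $\sim_k$-classes of length-$n$ factors of $\mathbf{x}$. Primitive: the incidence matrix (entry $(i,j)$ equal to $|\tau(a_i)|_{a_j}$) is primitive. Ultimately Pisot: the characteristic polynomial of the incidence matrix is $X^mP_\theta(X)$, $m\ge0$, $P_\theta$ the minimal polynomial of a Pisot number $\theta$ (algebraic integer $>1$ whose other conjugates have modulus $<1$). $\tau_2$: number the length-$2$ factors of $\mathbf{x}$ as $1,\dots,p$ in order of first occurrence via a bijection $\Theta_2$; for $\ell$ with $u=\Theta_2^{-1}(\ell)$ and $m'=|\tau(u[0])|$, $\tau_2(\ell)=\Theta_2(w_0)\cdots\Theta_2(w_{m'-1})$ with $w_j$ the length-$2$ factor of $\tau(u)$ at position $j$. *)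

From HB Require Import structures.
From mathcomp Require Import all_boot all_order all_algebra all_field.
From mathcomp Require Import boolp.
Set Implicit Arguments. Unset Strict Implicit. Unset Printing Implicit Defensive.
Import Order.TTheory GRing.Theory Num.Theory.

Section Subst.
Variable A : finType.
Implicit Types (tau : A -> seq A) (x : nat -> A).

Definition subst_word tau (w : seq A) : seq A := flatten (map tau w).

Definition incmx (R : nzRingType) tau : 'M[R]_#|A| :=
  \matrix_(i, j) ((count_mem (enum_val j) (tau (enum_val i)))%:R)%R.

Definition mxpow (R : nzRingType) n (M : 'M[R]_n) (k : nat) : 'M[R]_n :=
  iter k (mulmx M) (1%:M)%R.

Definition primitive tau : Prop :=
  exists k, (0 < k)%N /\ forall i j, (0 < mxpow (incmx int tau) k i j)%R.

Definition prolongable tau (a : A) : Prop :=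
  exists u, tau a = a :: u /\ u != [::].

(* x = tau^omega(a): every tau^n(a) is a prefix of x *)
Definition is_fixed_point tau (a : A) x : Prop :=
  forall n i, (i < size (iter n (subst_word tau) [:: a]))%N ->
    x i = nth a (iter n (subst_word tau) [:: a]) i.

Definition factors2 x : {set A * A} :=
  [set u | `[< exists i, (x i, x i.+1) = u >]].

(* tau_2 on a length-2 word u = u0 u1: the m' = |tau(u0)| length-2 factors
   of tau(u) starting at positions 0 .. m'-1 *)
Definition tau2 tau (u : A * A) : seq (A * A) :=
  let t := tau u.1 ++ tau u.2 in
  [seq (nth u.1 t j, nth u.1 t j.+1) | j <- iota 0 (size (tau u.1))].

Definition incmx2 (R : nzRingType) tau x : 'M[R]_#|factors2 x| :=
  \matrix_(i, j)
    ((count_mem (enum_val j : A * A) (tau2 tau (enum_val i : A * A)))%:R)%R.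

Definition occ (w u : seq A) : nat :=
  count (fun i => take (size w) (drop i u) == w) (iota 0 (size u - size w).+1).

Definition kab (k : nat) (u v : seq A) : bool :=
  [forall l : 'I_k.+1, [forall w : l.-tuple A, occ w u == occ w v]].

Definition factors x (n : nat) : {set n.-tuple A} :=
  [set w | `[< exists i, val w = mkseq (fun j => x (i + j)) n >]].

Definition kab_complexity (k : nat) x (n : nat) : nat :=
  #|[set [set v in factors x n | kab k (val u) (val v)] | u in factors x n]|.

End Subst.

Definition pisot (t : algC) : Prop :=
  t \in Aint /\ (1 < t)%R /\
  forall z : algC, root (minCpoly t) z -> z != t -> (`|z| < 1)%R.

Definition ultimately_pisot n (M : 'M[algC]_n) : Prop :=
  exists (m : nat) (t : algC), pisot t /\ (char_poly M = 'X^m * minCpoly t)%R.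

From mathcomp Require Import all_boot all_order all_algebra all_field.
From mathcomp Require Import boolp.
From mathcomp Require Import zify ring.
Import Order.TTheory GRing.Theory Num.Theory.
Set Implicit Arguments. Unset Strict Implicit. Unset Printing Implicit Defensive.

(* Let M be the incidence matrix of tau_2 and v_k the Parikh vector of the
   length-2 factors of x starting before position k.  Since tau maps each prefix
   of x onto a longer prefix, v_k = sum_j l_j M^j with uniformly bounded rows l_j
   (a Dumont-Thomas expansion).  The eigenvalue theta of M is a simple root of its
   characteristic polynomial and all other eigenvalues have modulus < 1, so
   M^j = theta^j P + (geometrically decaying part) with P of rank one: the v_k stay
   within bounded distance of a line.  For a word w, the number of occurrences
   of w starting before the boundary of the k-th block of a large power of tau is
   a linear functional of v_k, and so is that boundary; hence the occurrence count
   of w in prefixes is a linear function of the length up to a bounded error, and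
   occurrences of w in two factors of the same length differ by a bounded amount.
   Only finitely many words of length at most k matter, so the k-abelian class of
   a factor is determined by a bounded vector of such differences. *)

Lemma exists_bracket (f : nat -> nat) n N : f 0 <= n -> n < f N ->
  exists2 s, s < N & f s <= n < f s.+1.
Proof.
elim: N => [|N IH] f0_n n_fN; first by have := leq_ltn_trans f0_n n_fN; rewrite ltnn.
case: (ltnP n (f N)) => [n_lt | fN_n]; last by exists N; rewrite ?fN_n.
by have [s s_N s_br] := IH f0_n n_lt; exists s => //; apply: ltnW.
Qed.

Lemma count_iota0 (P : pred nat) n : count P (iota 0 n) = \sum_(i < n) P i.
Proof.
elim: n => [|n IH]; first by rewrite big_ord0.
by rewrite -addn1 iotaD count_cat IH /= addn0 addn1 big_ord_recr.
Qed.

Lemma mkseq_nth_drop (T : Type) (t : seq T) d r n : r + n <= size t ->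
  mkseq (fun q => nth d t (r + q)) n = take n (drop r t).
Proof.
move=> rn_t; rewrite -(map_nth_iota d); last by lia.
by rewrite /mkseq -{2}(addn0 r) iotaDl -map_comp.
Qed.

(** * Pisot matrices *)

Local Open Scope ring_scope.

Lemma char_poly_conj (F : fieldType) n (P A : 'M[F]_n) : P \in unitmx ->
  char_poly (P *m A *m invmx P) = char_poly A.
Proof.
move=> Pu; rewrite /char_poly /char_poly_mx.
have PcK : map_mx (@polyC F) P *m map_mx (@polyC F) (invmx P) = 1%:M.
  by rewrite -map_mxM mulmxV // map_mx1.
have -> : 'X%:M - map_mx polyC (P *m A *m invmx P) =
    map_mx (@polyC F) P *m ('X%:M - map_mx polyC A) *m map_mx (@polyC F) (invmx P).
  by rewrite !map_mxM mulmxBr mulmxBl mul_mx_scalar -scalemxAl PcK scalemx1.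
by rewrite !det_mulmx mulrAC -det_mulmx PcK det1 mul1r.
Qed.

(* minCpoly th is the image of an irreducible rational polynomial p; a double
   root th would make p divide its own derivative. *)
Lemma minCpoly_simple_root th : ~~ root (minCpoly th %/ ('X - th%:P)) th.
Proof.
set P := minCpoly th; set Q := P %/ ('X - th%:P).
have dP : P = Q * ('X - th%:P) by rewrite divpK // dvdp_XsubCl root_minCpoly.
apply/negP => Qth.
have : root P^`() th.
  by rewrite dP derivM derivXsubC mulr1 /root !hornerE (rootP Qth) subrr mulr0 add0r.
have [p [Pp p_monic] minP] := minCpolyP th.
rewrite /P Pp deriv_map minP => /dvdp_leq.
have p_gt1 : (1 < size p)%N by have := size_minCpoly th; rewrite Pp size_map_poly.
have dp_neq0 : p^`() != 0.
  apply/eqP => /(congr1 (fun q : {poly rat} => q`_(size p).-2)).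
  rewrite coef_deriv coef0.
  have -> : (size p).-2.+1 = (size p).-1 by case: (size p) p_gt1 => [|[|k]].
  move/eqP; rewrite mulrn_eq0 -lead_coefE (monicP p_monic) oner_eq0 /=.
  by case: (size p) p_gt1 => [|[|k]].
by move/(_ dp_neq0); rewrite leqNgt lt_size_deriv ?monic_neq0.
Qed.

Lemma pisot_factorization th m : pisot th ->
  exists2 rs : seq algC,
    'X^m * minCpoly th = \prod_(z <- rs) ('X - z%:P) * ('X - th%:P) &
    {in rs, forall z, `|z| < 1}.
Proof.
case=> _ [th_gt1 conj_lt1].
set P := minCpoly th; set Q := 'X^m * (P %/ ('X - th%:P)).
have dP : P = (P %/ ('X - th%:P)) * ('X - th%:P).
  by rewrite divpK // dvdp_XsubCl root_minCpoly.
have Q_monic : Q \is monic.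
  rewrite monicMl ?monicXn //; move: (minCpoly_monic th).
  by rewrite -/P {1}dP monicMr // monicXsubC.
have [rs Qrs] := closed_field_poly_normal Q.
rewrite (monicP Q_monic) scale1r in Qrs.
exists rs; first by rewrite {1}dP mulrA -/Q Qrs.
move=> z; rewrite -root_prod_XsubC -Qrs /root hornerM hornerXn mulf_eq0 expf_eq0.
case/orP => [/andP[_ /eqP->] | Qz]; first by rewrite normr0 ltr01.
apply: conj_lt1; first by rewrite -/P /root {1}dP hornerM (eqP Qz) mul0r.
by apply: contraTneq Qz => ->; exact: minCpoly_simple_root.
Qed.

Lemma char_poly_spectral_split (F : fieldType) n (M : 'M[F]_n.+1) th rs :
  th \notin rs -> char_poly M = \prod_(z <- rs) ('X - z%:P) * ('X - th%:P) ->
  exists K E : 'M[F]_n.+1,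
    [/\ K + E = 1%:M, E *m M = th *: E & K *m \prod_(z <- rs) (M - z%:M) = 0].
Proof.
move=> th_rs chM; set Q := \prod_(z <- rs) _ in chM.
have : coprimep ('X - th%:P) Q by rewrite coprimep_sym coprimep_XsubC root_prod_XsubC.
case/Bezout_eq1_coprimepP => -[a b] /= Bez.
have QM : horner_mx M Q = \prod_(z <- rs) (M - z%:M).
  rewrite rmorph_prod; apply: eq_bigr => z _.
  by rewrite rmorphB /= horner_mx_X horner_mx_C.
have CH : horner_mx M (Q * ('X - th%:P)) = 0 by rewrite -chM Cayley_Hamilton.
exists (horner_mx M (a * ('X - th%:P))), (horner_mx M (b * Q)); split.
- by rewrite -rmorphD Bez rmorph1.
- have : horner_mx M (b * Q) * horner_mx M ('X - th%:P) = 0.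
    by rewrite -rmorphM -mulrA rmorphM /= CH mulr0.
  rewrite rmorphB /= horner_mx_X horner_mx_C mulrBr => /eqP.
  by rewrite subr_eq0 -mul_mx_scalar => /eqP.
- by rewrite -QM mulmxE -rmorphM -mulrA [_ * Q]mulrC rmorphM /= CH mulr0.
Qed.

Lemma trig_row_ker (R : idomainType) n (T : 'M[R]_n) th i0 (w : 'rV_n) :
  is_trig_mx T -> (forall j, j != i0 -> T j j != th) ->
  w *m (T - th%:M) = 0 -> w 0 i0 = 0 -> w = 0.
Proof.
move=> /is_trig_mxP T_trig T_diag wT wi0.
suff wj d (j : 'I_n) : (n - j)%N = d -> w 0 j = 0.
  by apply/rowP => j; rewrite mxE (wj _ j erefl).
elim/ltn_ind: d j => d IH j dj.
have [-> // | j_i0] := eqVneq j i0.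
have /rowP/(_ j) := wT; rewrite !mxE (bigD1 j) //= big1 => [|i ij]; last first.
  rewrite !mxE (negbTE ij) mulr0n subr0.
  case: (ltngtP i j) => [ij' | ji | /val_inj/eqP]; last by rewrite (negbTE ij).
  - by rewrite T_trig ?mulr0.
  - by rewrite (IH (n - i)%N) ?mul0r //; rewrite -dj; have := ltn_ord i; lia.
rewrite !mxE eqxx mulr1n addr0 => /eqP; rewrite mulf_eq0 subr_eq0.
by rewrite (negbTE (T_diag j j_i0)) orbF => /eqP.
Qed.

Lemma simple_eigenvalue_line (C : numClosedFieldType) n (M : 'M[C]_n.+1) th rs :
  th \notin rs -> char_poly M = \prod_(z <- rs) ('X - z%:P) * ('X - th%:P) ->
  exists (u : 'rV_n.+1) (kap : 'rV_n.+1 -> C),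
    forall S, S *m M = th *: S -> S = kap S *: u.
Proof.
move=> th_rs chM.
have [P /unitarymx_unit Pu] := Schur M (ltn0Sn n).
rewrite /similar_to conjumx //; set T := P *m M *m invmx P => T_trig.
have chT := char_poly_trig T_trig; rewrite char_poly_conj // chM in chT.
have [i0 Ti0] : exists i0, T i0 i0 = th.
  have : root (\prod_(z <- rs) ('X - z%:P) * ('X - th%:P)) th.
    by rewrite rootM root_XsubC eqxx orbT.
  rewrite chT /root horner_prod => /prodf_eq0[i _].
  by rewrite !hornerE subr_eq0 => /eqP ->; exists i.
have T_diag j : j != i0 -> T j j != th.
  move: chT; rewrite (bigD1 i0) //= Ti0 [RHS]mulrC => /mulIf.
  rewrite polyXsubC_eq0 => /(_ isT) chT' ji0; apply: contra th_rs => /eqP Tj.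
  rewrite -root_prod_XsubC chT' /root horner_prod (bigD1 j) //=.
  by rewrite !hornerE Tj subrr mul0r.
(* th occurs once on the diagonal of the triangular form T, at i0, so an
   eigenvector is determined by its i0-th coordinate in the Schur basis. *)
pose phi (S : 'rV_n.+1) := (S *m invmx P) 0 i0.
have phi_lin a S S' : phi (S - a *: S') = phi S - a * phi S'.
  by rewrite /phi mulmxBl -scalemxAl !mxE.
have phi_inj S : S *m M = th *: S -> phi S = 0 -> S = 0.
  move=> SM phiS; rewrite -[S](mulmxKV Pu).
  suff -> : S *m invmx P = 0 by rewrite mul0mx.
  apply: (trig_row_ker T_trig T_diag) => //.
  by rewrite mulmxBr mul_mx_scalar !mulmxA mulmxKV // SM -scalemxAl subrr.
case: (pselect (exists2 S0, S0 *m M = th *: S0 & phi S0 != 0)).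
  case=> S0 S0M phiS0.
  exists ((phi S0)^-1 *: S0), phi => S SM; apply/eqP; rewrite scalerA -subr_eq0.
  apply/eqP/phi_inj; last by rewrite phi_lin mulfVK // subrr.
  by rewrite mulmxBl -!scalemxAl S0M SM scalerBr !scalerA mulrC.
move=> none; exists 0, phi => S SM; rewrite scaler0.
by apply: (phi_inj _ SM); apply/eqP/negPn/negP => phiS; apply: none; exists S.
Qed.

Lemma orbit_norm_sum_bounded (R : numFieldType) n (M : 'M[R]_n.+1) rs :
  {in rs, forall z, `|z| < 1} ->
  forall r : 'rV_n.+1, r *m \prod_(z <- rs) (M - z%:M) = 0 ->
  forall c : 'cV_n.+1, exists B : R,
    forall J, \sum_(j < J) `|(r *m M ^+ j *m c) 0 0| <= B.
Proof.
elim: rs => [|z rs IH] rs_lt1 r.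
  rewrite big_nil mulmx1 => -> c; exists 0 => J.
  by rewrite big1 // => j _; rewrite !mul0mx mxE normr0.
rewrite big_cons mulmxA => rMz c.
have rs_lt1' : {in rs, forall z', `|z'| < 1}.
  by move=> z' z'rs; apply: rs_lt1; rewrite inE z'rs orbT.
have [B HB] := IH rs_lt1' _ rMz c.
(* (d_j) is summable by induction and a_(j+1) = z a_j + d_j with |z| < 1. *)
pose a j := (r *m M ^+ j *m c) 0 0.
pose d j := (r *m (M - z%:M) *m M ^+ j *m c) 0 0.
have a_rec j : a j.+1 = z * a j + d j.
  rewrite /a /d mulmxBr mul_mx_scalar !mulmxBl -!scalemxAl exprS -mulmxE !mulmxA !mxE.
  by rewrite addrCA subrr addr0.
have z_lt1 : `|z| < 1 by apply: rs_lt1; rewrite inE eqxx.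
pose S J := \sum_(j < J) `|a j|.
have S_rec J : S J.+1 <= `|a 0%N| + `|z| * S J + B.
  rewrite /S big_ord_recl -addrA lerD2l.
  apply: le_trans (_ : \sum_(j < J) (`|z| * `|a j| + `|d j|) <= _).
    by apply: ler_sum => j _; rewrite a_rec -normrM ler_normD.
  by rewrite big_split /= -mulr_sumr lerD2l HB.
exists ((`|a 0%N| + B) / (1 - `|z|)) => J.
rewrite ler_pdivlMr ?subr_gt0 // mulrBr mulr1 lerBlDr addrAC [_ * `|z|]mulrC.
by apply: le_trans (S_rec J); rewrite /S big_ord_recr /= lerDl.
Qed.

Lemma pisot_row_decomposition n (M : 'M[algC]_n.+1) th m : pisot th ->
  char_poly M = 'X^m * minCpoly th ->
  exists (u : 'rV_n.+1) (kap : 'rV_n.+1 -> algC) (K : 'M_n.+1),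
    (forall (r : 'rV_n.+1) (c : 'cV_n.+1), exists B : algC,
        forall J, \sum_(j < J) `|(r *m K *m M ^+ j *m c) 0 0| <= B) /\
    forall v j, v *m M ^+ j = v *m K *m M ^+ j + (th ^+ j * kap v) *: u.
Proof.
move=> th_pisot chM; have [rs chM' rs_lt1] := pisot_factorization m th_pisot.
rewrite -chM in chM'.
have th_rs : th \notin rs.
  case: th_pisot => _ [th_gt1 _]; apply/negP => /rs_lt1.
  by rewrite gtr0_norm ?(lt_trans ltr01) // => /(lt_trans th_gt1); rewrite ltxx.
have [K [E [KE EM KQ]]] := char_poly_spectral_split th_rs chM'.
have [u [kap line]] := simple_eigenvalue_line th_rs chM'.
exists u, (fun v => kap (v *m E)), K; split.
  by move=> r; apply: orbit_norm_sum_bounded rs_lt1 _ _; rewrite -mulmxA KQ mulmx0.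
move=> v j; have EMj : E *m M ^+ j = th ^+ j *: E.
  elim: j => [|j IH]; first by rewrite mulmx1 scale1r.
  by rewrite exprSr mulmxE mulrA -mulmxE IH -scalemxAl EM scalerA -exprSr.
rewrite -{1}[v]mulmx1 -KE mulmxDr mulmxDl -(mulmxA v E) EMj -scalemxAr -scalerA.
by rewrite -line // -mulmxA EM scalemxAr.
Qed.

Lemma pisot_power_sum_approx n (M : 'M[algC]_n) th m : pisot th ->
  char_poly M = 'X^m * minCpoly th ->
  exists (u : 'rV_n) (kap : 'rV_n -> algC), forall c : 'cV_n, exists B : algC,
    forall (L : algC) J (l : nat -> 'rV_n), (forall j b, `|l j 0 b| <= L) ->
    `|(\sum_(j < J) l j *m M ^+ j *m c) 0 0
       - (\sum_(j < J) th ^+ j * kap (l j)) * (u *m c) 0 0| <= L * B.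
Proof.
case: n M => [|n] M th_pisot chM.
  exists 0, (fun _ => 0) => c; exists 0 => L J l _.
  rewrite summxE big1 => [|j _]; last by rewrite mxE big_ord0.
  by rewrite mxE big_ord0 mulr0 subrr normr0 mulr0.
have [u [kap [K [K_bounded decomp]]]] := pisot_row_decomposition th_pisot chM.
exists u, kap => c.
pose e b : 'rV[algC]_n.+1 := delta_mx 0 b.
have [B HB] := fin_all_exists (fun b => K_bounded (e b) c).
exists (\sum_b B b) => L J l l_le.
have L_ge0 : 0 <= L := le_trans (normr_ge0 _) (l_le 0%N 0).
have -> : (\sum_(j < J) l j *m M ^+ j *m c) 0 0
    - (\sum_(j < J) th ^+ j * kap (l j)) * (u *m c) 0 0
    = \sum_(j < J) \sum_b l j 0 b * (e b *m K *m M ^+ j *m c) 0 0.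
  rewrite summxE mulr_suml -sumrB; apply: eq_bigr => j _.
  rewrite decomp mulmxDl -scalemxAl [X in X - _]mxE [X in _ + X - _]mxE addrK.
  rewrite -!mulmxA (mulmx_sum_row (l j)) summxE; apply: eq_bigr => b _.
  by rewrite mxE rowE !mulmxA.
apply: le_trans (ler_norm_sum _ _ _) _.
apply: le_trans (_ : \sum_(j < J) \sum_b L * `|(e b *m K *m M ^+ j *m c) 0 0| <= _).
  apply: ler_sum => j _; apply: le_trans (ler_norm_sum _ _ _) _.
  by apply: ler_sum => b _; rewrite normrM ler_wpM2r.
by rewrite exchange_big mulr_sumr; apply: ler_sum => b _; rewrite -mulr_sumr ler_wpM2l.
Qed.

Lemma norm_sum_delta (R : numDomainType) n (f : nat -> 'I_n) k b :
  `|(\sum_(r < k) delta_mx 0 (f r) : 'rV[R]_n) 0 b| <= k%:R.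
Proof.
rewrite summxE; apply: le_trans (ler_norm_sum _ _ _) _.
rewrite -[k in k%:R]card_ord -sumr_const; apply: ler_sum => r _.
by rewrite mxE normr_nat lern1 leq_b1.
Qed.

(** * Linear discrepancy *)

Lemma natr_unbounded (R : archiNumDomainType) (u : nat -> nat) (B : R) :
  (forall k, (k <= u k)%N) -> ~ (forall k, (u k)%:R <= B).
Proof.
move=> u_ge u_le; have B_ge0 : 0 <= B := le_trans (ler0n _ _) (u_le 0%N).
have : (Num.bound B)%:R <= B by apply: le_trans (u_le _); rewrite ler_nat.
by move/(lt_le_trans (archi_boundP B_ge0)); rewrite ltxx.
Qed.

Lemma discrepancy_interpolate (R : numDomainType) (Q P : nat -> nat) (f D : R) L :
  P 0%N = 0%N -> (forall s, (s < P s.+1)%N) -> (forall s, (P s.+1 <= P s + L)%N) ->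
  (forall i d, (Q i <= Q (i + d) <= Q i + d)%N) ->
  (forall s, `|(Q (P s))%:R - f * (P s)%:R| <= D) ->
  forall k, `|(Q k)%:R - f * k%:R| <= D + L%:R + `|f| * L%:R.
Proof.
move=> P0 P_gt P_step Q_lip Q_near k.
have [|s _ /andP[s_k k_s]] := exists_bracket (f := P) _ (P_gt k); first by rewrite P0.
set d := (k - P s)%N; have d_L : (d <= L)%N.
  by rewrite leq_subLR; apply: leq_trans (ltnW k_s) (P_step s).
have /andP[Q_ge Q_le] := Q_lip (P s) d; rewrite addnC subnK // in Q_ge Q_le.
set e := (Q k - Q (P s))%N; have e_d : (e <= d)%N by rewrite leq_subLR.
have -> : (Q k)%:R - f * k%:R = ((Q (P s))%:R - f * (P s)%:R) + (e%:R - f * d%:R).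
  by rewrite /e /d !natrB //; ring.
apply: le_trans (ler_normD _ _) _; rewrite -addrA; apply: lerD; first exact: Q_near.
apply: le_trans (ler_normB _ _) _; apply: lerD.
  by rewrite normr_nat ler_nat (leq_trans e_d).
by rewrite normrM normr_nat ler_wpM2l // ler_nat.
Qed.

Lemma bounded_discrepancy_balanced (R : archiNumDomainType) (Q : nat -> nat) (f D : R):
  (forall k, `|(Q k)%:R - f * k%:R| <= D) ->
  exists K, forall i i' d, (Q (i + d) + Q i' <= Q (i' + d) + Q i + K)%N.
Proof.
move=> Q_near; set D4 := D + D + (D + D).
have D4_ge0 : 0 <= D4.
  by have D_ge0 := le_trans (normr_ge0 _) (Q_near 0%N); rewrite !addr_ge0.
exists (Num.bound D4) => i i' d.
set a := (Q (i + d) + Q i')%N; set b := (Q (i' + d) + Q i)%N.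
pose E k := (Q k)%:R - f * k%:R.
have ab_D : a%:R - b%:R <= D4.
  apply: le_trans (real_ler_norm (rpredB (realn _ _) (realn _ _))) _.
  have -> : a%:R - b%:R = (E (i + d)%N - E i) - (E (i' + d)%N - E i') :> R.
    by rewrite /a /b /E !natrD; ring.
  apply: le_trans (ler_normB _ _) _; apply: lerD;
    by apply: le_trans (ler_normB _ _) _; apply: lerD; apply: Q_near.
have : a%:R < (b + Num.bound D4)%:R :> R.
  by rewrite natrD -ltrBlDl; apply: le_lt_trans ab_D (archi_boundP D4_ge0).
by rewrite ltr_nat => /ltnW.
Qed.

Local Close Scope ring_scope.

(** * Substitutions *)

Definition subst_pow (A : finType) (tau : A -> seq A) j (b : A) : seq A :=
  iter j (subst_word tau) [:: b].

Definition factor (A : Type) (x : nat -> A) i n : seq A := mkseq (fun j => x (i + j)) n.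

Lemma occ_short (A : finType) (w u : seq A) : size u < size w -> occ w u = 0.
Proof.
move=> u_w; have /eqP w_u0 : size u - size w == 0 by rewrite subn_eq0 ltnW.
rewrite /occ w_u0 /= drop0.
by rewrite take_oversize ?(ltnW u_w) //; case: eqP => // u_eq; rewrite u_eq ltnn in u_w.
Qed.

Section SubstWord.
Variable A : finType.
Implicit Types (s f tau : A -> seq A) (w : seq A).

Lemma subst_word_cons s b w : subst_word s (b :: w) = s b ++ subst_word s w.
Proof. by []. Qed.

Lemma subst_word_cat s w1 w2 :
  subst_word s (w1 ++ w2) = subst_word s w1 ++ subst_word s w2.
Proof. by rewrite /subst_word map_cat flatten_cat. Qed.

Lemma subst_word_comp s f w :
  subst_word s (subst_word f w) = subst_word (fun b => subst_word s (f b)) w.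
Proof. by elim: w => [//|b w IH]; rewrite !subst_word_cons subst_word_cat IH. Qed.

Lemma iter_subst_word tau j w :
  iter j (subst_word tau) w = subst_word (subst_pow tau j) w.
Proof.
elim: j w => [|j IH] w; first by rewrite /subst_word flatten_seq1.
by rewrite iterS IH subst_word_comp.
Qed.

Lemma subst_pow1 tau b : subst_pow tau 1 b = tau b.
Proof. by rewrite /subst_pow /= /subst_word /= cats0. Qed.

Lemma subst_powSr tau j b :
  subst_pow tau j.+1 b = subst_word (subst_pow tau j) (tau b).
Proof. by rewrite /subst_pow iterSr iter_subst_word /subst_word /= cats0. Qed.

Lemma size_subst_word s w : (forall b, 0 < size (s b)) -> size w <= size (subst_word s w).
Proof.
move=> s_pos; elim: w => [//|b w IH]; rewrite subst_word_cons size_cat /=.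
by have := s_pos b; lia.
Qed.

Lemma size_subst_word_mem s w b : b \in w -> size (s b) <= size (subst_word s w).
Proof.
elim: w => [//|c w IH]; rewrite inE subst_word_cons size_cat.
by case/orP => [/eqP -> | /IH]; lia.
Qed.

Lemma mxpow_incmx_ge0 tau k i j : (0 <= mxpow (incmx int tau) k i j)%R.
Proof.
elim: k i => [|k IH] i; first by rewrite mxE ler0n.
by rewrite mxE sumr_ge0 // => d _; rewrite mulr_ge0 // mxE ler0n.
Qed.

Lemma mxpow_incmx_gt0 tau k i j :
  (0 < mxpow (incmx int tau) k i j)%R -> enum_val j \in subst_pow tau k (enum_val i).
Proof.
elim: k i => [|k IH] i.
  by rewrite mxE; case: eqP => [-> | _]; rewrite ?inE ?ltxx.
rewrite mxE => /lt0r_neq0; rewrite psumr_neq0 => [/hasP[d _]|d _]; last first.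
  by rewrite mulr_ge0 ?mxpow_incmx_ge0 // mxE ler0n.
move/lt0r_neq0; rewrite mulf_eq0 negb_or => /andP[inc_id pow_dj].
rewrite subst_powSr; apply/flatten_mapP; exists (enum_val d).
  by move: inc_id; rewrite mxE pnatr_eq0 -lt0n -has_count has_pred1.
by apply: IH; rewrite lt0r pow_dj mxpow_incmx_ge0.
Qed.

Lemma primitive_mem tau : primitive tau ->
  exists2 k, 0 < k & forall b c, c \in subst_pow tau k b.
Proof.
case=> k [k_gt0 pow_gt0]; exists k => // b c.
by have := mxpow_incmx_gt0 (pow_gt0 (enum_rank b) (enum_rank c)); rewrite !enum_rankK.
Qed.

Lemma primitive_nonerasing tau : primitive tau -> forall b, 0 < size (tau b).
Proof.
case/primitive_mem => -[//|k] _ mem b; have := mem b b.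
by rewrite subst_powSr lt0n; apply: contraTneq => /size0nil ->.
Qed.

End SubstWord.

(** * The fixed point of a prolongable substitution *)

Section FixedPoint.
Variables (A : finType) (tau : A -> seq A) (a : A) (x : nat -> A).
Hypothesis tau_nonerasing : forall b, 0 < size (tau b).
Hypothesis tau_prolongable : prolongable tau a.
Hypothesis x_fixed : is_fixed_point tau a x.

Lemma subst_pow_prolong n : exists2 t, subst_pow tau n a = a :: t & n <= size t.
Proof.
elim: n => [|n [t tau_n n_t]]; first by exists [::].
case: tau_prolongable => u [tau_a u_neq0]; exists (u ++ subst_word tau t).
  by rewrite /subst_pow iterS -/(subst_pow tau n a) tau_n subst_word_cons tau_a.
have := size_subst_word t tau_nonerasing; have : 0 < size u by case: u u_neq0 {tau_a}.
by rewrite size_cat; lia.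
Qed.

Lemma size_subst_pow_prolong j : j < size (subst_pow tau j a).
Proof. by have [t -> j_t] := subst_pow_prolong j. Qed.

Lemma subst_pow_size_unbounded : primitive tau ->
  exists k0, forall b j, j < size (subst_pow tau (k0 + j) b).
Proof.
case/primitive_mem => k0 _ mem; exists k0 => b j.
rewrite /subst_pow addnC iterD iter_subst_word -/(subst_pow tau k0 b).
exact: leq_trans (size_subst_pow_prolong j) (size_subst_word_mem _ (mem b a)).
Qed.

(* When x is also a fixed point of s (e.g. s = tau^j), s(x_k) occupies the
   positions [block_start s k, block_start s k.+1) of x. *)
Definition block_start (s : A -> seq A) k := \sum_(t < k) size (s (x t)).

Lemma block_startS s k : block_start s k.+1 = block_start s k + size (s (x k)).
Proof. by rewrite /block_start big_ord_recr. Qed.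

Lemma size_subst_word_prefix s k : size (subst_word s (mkseq x k)) = block_start s k.
Proof.
elim: k => [|k IH]; first by rewrite /block_start big_ord0.
by rewrite mkseqS -cats1 subst_word_cat size_cat IH block_startS subst_word_cons cats0.
Qed.

Lemma block_start_ge s : (forall b, 0 < size (s b)) -> forall k, k <= block_start s k.
Proof.
by move=> s_pos; elim=> [//|k IH]; rewrite block_startS; have := s_pos (x k); lia.
Qed.

Lemma subst_pow_prefix k : exists rest, subst_pow tau k a = mkseq x k ++ x k :: rest.
Proof.
set w := subst_pow tau k a; have k_w : k < size w := size_subst_pow_prolong k.
have xw i : i < size w -> nth a w i = x i by move=> i_w; rewrite (x_fixed i_w).
exists (drop k.+1 w); rewrite -{1}(cat_take_drop k w) (drop_nth a k_w) xw //.
suff -> : take k w = mkseq x k by [].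
have k_w' : k <= size w by apply: ltnW.
apply: (@eq_from_nth _ a); first by rewrite size_takel // size_mkseq.
move=> i; rewrite size_takel // => i_k.
by rewrite nth_take // nth_mkseq // xw // (ltn_trans i_k).
Qed.

Lemma nth_block j k r : r < size (subst_pow tau j (x k)) ->
  x (block_start (subst_pow tau j) k + r) = nth a (subst_pow tau j (x k)) r.
Proof.
move=> r_lt; have [rest tau_k] := subst_pow_prefix k.
have tau_jk : subst_pow tau (j + k) a =
    subst_word (subst_pow tau j) (mkseq x k) ++ subst_pow tau j (x k) ++
    subst_word (subst_pow tau j) rest.
  rewrite /subst_pow iterD -/(subst_pow tau k a) tau_k.
  by rewrite iter_subst_word subst_word_cat.
rewrite (x_fixed (n := j + k)) -/(subst_pow tau (j + k) a) tau_jk; last first.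
  by rewrite !size_cat size_subst_word_prefix ltn_add2l ltn_addr.
by rewrite nth_cat size_subst_word_prefix ltnNge leq_addr /= addKn nth_cat r_lt.
Qed.

Lemma nth_block_tau k r : r < size (tau (x k)) ->
  x (block_start tau k + r) = nth a (tau (x k)) r.
Proof.
have block1 : block_start (subst_pow tau 1) k = block_start tau k.
  by apply: eq_bigr => t _; rewrite subst_pow1.
by rewrite -block1 -!(subst_pow1 tau (x k)); apply: nth_block.
Qed.

Lemma block_start_gt k : 0 < k -> k < block_start tau k.
Proof.
case: k => [//|k] _; elim: k => [|k IH]; last first.
  by rewrite block_startS; have := tau_nonerasing (x k.+1); lia.
have [u [tau_a u_neq0]] := tau_prolongable.
have x0 : x 0 = a by rewrite (x_fixed (n := 0)).
by rewrite block_startS /block_start big_ord0 x0 tau_a; case: u u_neq0 {tau_a}.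
Qed.

Lemma pair_at_in t : (x t, x t.+1) \in factors2 x.
Proof. by rewrite inE; apply/asboolP; exists t. Qed.

Local Notation p := #|factors2 x|.
Local Notation M2 := (incmx2 algC tau x).

Definition pair_idx t : 'I_p := enum_rank_in (pair_at_in 0) (x t, x t.+1).

Lemma pair_idxK t : enum_val (pair_idx t) = (x t, x t.+1).
Proof. exact: (enum_rankK_in (pair_at_in 0) (pair_at_in t)). Qed.

Local Open Scope ring_scope.

Definition parikh2 k : 'rV[algC]_p := \sum_(t < k) delta_mx 0 (pair_idx t).

Definition weight_col (g : A * A -> nat) : 'cV[algC]_p :=
  \col_i (g (enum_val i))%:R.

Lemma parikh2_weight g k :
  (parikh2 k *m weight_col g) 0 0 = (\sum_(t < k) g (x t, x t.+1))%:R.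
Proof.
rewrite mulmx_suml summxE natr_sum; apply: eq_bigr => t _.
by rewrite -rowE !mxE pair_idxK.
Qed.

Lemma parikh2D k1 k2 :
  parikh2 (k1 + k2) = parikh2 k1 + \sum_(r < k2) delta_mx 0 (pair_idx (k1 + r)).
Proof. by rewrite /parikh2 big_split_ord. Qed.

(* The pair (x_k, x_(k+1)) gives rise, through tau_2, to the length-2 factors of
   x starting in the block tau(x_k). *)
Lemma parikh2_block_start k : parikh2 (block_start tau k) = parikh2 k *m M2.
Proof.
elim: k => [|k IH]; first by rewrite /parikh2 /block_start !big_ord0 mul0mx.
rewrite block_startS parikh2D IH /parikh2 big_ord_recr /= mulmxDl; congr (_ + _).
rewrite -rowE; apply/rowP => j; rewrite summxE !mxE pair_idxK /tau2 count_map.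
rewrite count_iota0 natr_sum; apply: eq_bigr => r _; rewrite !mxE eqxx /=.
congr ((nat_of_bool _)%:R); rewrite -(inj_eq enum_val_inj) pair_idxK eq_sym.
have r_lt := ltn_ord r; congr (_ == _); congr (_, _).
  by rewrite nth_block_tau // nth_cat r_lt (set_nth_default a).
rewrite nth_cat; case: ltnP => r1_tau.
  by rewrite -addnS nth_block_tau // (set_nth_default a).
have r1 : r.+1 = size (tau (x k)) by apply/eqP; rewrite eqn_leq r1_tau r_lt.
rewrite -addnS r1 subnn -block_startS -[block_start _ k.+1]addn0.
by rewrite nth_block_tau // (set_nth_default a).
Qed.

Definition max_len := (\max_(b : A) size (tau b))%N.

(* Split the prefix of length k at the last block boundary of tau and recurse on
   the preimage prefix, as in the Dumont-Thomas numeration. *)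
Lemma parikh2_expansion k : exists l : nat -> 'rV[algC]_p,
  (forall j b, `|l j 0 b| <= max_len%:R) /\
  forall N, (k < N)%N -> parikh2 k = \sum_(j < N) l j *m M2 ^+ j.
Proof.
elim/ltn_ind: k => -[_ | k IH].
  exists (fun _ => 0); split=> [j b | N _]; first by rewrite mxE normr0 ler0n.
  by rewrite /parikh2 big_ord0 big1 // => j _; rewrite mul0mx.
have k1_gt : (k.+1 < block_start tau k.+2)%N.
  exact: leq_trans (block_start_ge tau_nonerasing k.+2).
have start0 : (block_start tau 0 <= k.+1)%N by rewrite /block_start big_ord0.
have [s _ /andP[s_k k_s]] := exists_bracket start0 k1_gt.
have s_lt : (s < k.+1)%N.
  case: s s_k {k_s} => [//|s] s_k; exact: leq_trans (block_start_gt _) s_k.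
have [l [l_le l_eq]] := IH s s_lt.
pose d := (k.+1 - block_start tau s)%N.
pose rest : 'rV[algC]_p :=
  \sum_(r < d) delta_mx 0 (pair_idx (block_start tau s + r)).
exists (fun j => if j is j'.+1 then l j' else rest); split.
  case=> [|j] b //=.
  apply: le_trans (norm_sum_delta _ (fun r => pair_idx (block_start tau s + r)) d b) _.
  rewrite /d ler_nat leq_subLR; apply: leq_trans (ltnW k_s) _.
  by rewrite block_startS leq_add2l; apply: (leq_bigmax (x s)).
case=> [//|N] k_N; rewrite big_ord_recl /= expr0 mulmx1.
rewrite -[k.+1](subnKC s_k) parikh2D parikh2_block_start (l_eq N); last first.
  by move: k_N; rewrite ltnS; apply: leq_trans.
rewrite addrC mulmx_suml; congr (_ + _).
by apply: eq_bigr => j _; rewrite exprSr mulmxA.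
Qed.

Local Close Scope ring_scope.

Definition occ_prefix (w : seq A) k := \sum_(t < k) (factor x t (size w) == w : nat).

Lemma occ_prefixD w k1 k2 : occ_prefix w (k1 + k2) =
  occ_prefix w k1 + \sum_(r < k2) (factor x (k1 + r) (size w) == w : nat).
Proof. by rewrite /occ_prefix big_split_ord. Qed.

Definition block_occ (s : A -> seq A) (w : seq A) (bc : A * A) :=
  \sum_(r < size (s bc.1)) (take (size w) (drop r (s bc.1 ++ s bc.2)) == w : nat).

Lemma occ_prefix_block_start j w : (forall b, size w <= size (subst_pow tau j b)) ->
  forall k, occ_prefix w (block_start (subst_pow tau j) k) =
            \sum_(t < k) block_occ (subst_pow tau j) w (x t, x t.+1).
Proof.
move=> w_s; set s := subst_pow tau j in w_s *; elim=> [|k IH].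
  by rewrite /block_start !big_ord0 /occ_prefix big_ord0.
rewrite block_startS occ_prefixD IH big_ord_recr /=; congr (_ + _).
apply: eq_bigr => r _; congr (nat_of_bool (_ == _)); have r_lt := ltn_ord r.
rewrite -(mkseq_nth_drop a); last by rewrite size_cat leq_add // ltnW.
apply/eq_in_map => q; rewrite mem_iota add0n => q_w; rewrite nth_cat.
case: ltnP => /= [rq_lt | rq_ge]; first by rewrite -addnA nth_block.
have -> : block_start s k + r + q = block_start s k.+1 + (r + q - size (s (x k))).
  by rewrite block_startS -addnA -[in LHS](subnKC rq_ge) addnA.
by rewrite nth_block //; apply: leq_trans (w_s (x k.+1)); lia.
Qed.

Lemma occ_factor w i n : size w <= n ->
  occ_prefix w (i + (n - size w).+1) = occ_prefix w i + occ w (factor x i n).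
Proof.
move=> w_n; rewrite occ_prefixD /occ size_mkseq count_iota0; congr (_ + _).
apply: eq_bigr => r _; have r_lt := ltn_ord r.
rewrite -(mkseq_nth_drop a); last by rewrite size_mkseq; lia.
congr (nat_of_bool (_ == _)); apply/eq_in_map => q; rewrite mem_iota add0n => q_w.
by rewrite nth_mkseq ?addnA //; lia.
Qed.

Lemma occ_prefix_lipschitz w i d :
  occ_prefix w i <= occ_prefix w (i + d) <= occ_prefix w i + d.
Proof.
rewrite occ_prefixD leq_addr leq_add2l /=.
by rewrite -[leqRHS]card_ord -sum1_card leq_sum // => r _; rewrite leq_b1.
Qed.

Section Pisot.
Variables (th : algC) (m : nat).
Hypothesis tau_primitive : primitive tau.
Hypothesis th_pisot : pisot th.
Hypothesis M2_char : char_poly M2 = ('X^m * minCpoly th)%R.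

Local Open Scope ring_scope.

Lemma parikh2_near_line : exists (g : 'cV[algC]_p -> algC) (T : nat -> algC),
  forall c, exists B, forall k, `|(parikh2 k *m c) 0 0 - T k * g c| <= B.
Proof.
have [u [kap approx]] := pisot_power_sum_approx th_pisot M2_char.
case: (choice parikh2_expansion) => l l_spec.
exists (fun c => (u *m c) 0 0), (fun k => \sum_(j < k.+1) th ^+ j * kap (l k j)) => c.
have [B HB] := approx c; exists (max_len%:R * B) => k.
have [l_le l_eq] := l_spec k.
by rewrite (l_eq k.+1) // mulmx_suml; apply: HB.
Qed.

Lemma occ_prefix_near w : exists f D : algC,
  forall k, `|(occ_prefix w k)%:R - f * k%:R| <= D.
Proof.
have [k0 grow] := subst_pow_size_unbounded tau_primitive.
(* Blocks of s are longer than w, so an occurrence of w starting in the block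
   s(x_k) lies in s(x_k) s(x_(k+1)). *)
set s := subst_pow tau (k0 + size w).
have w_s b : (size w < size (s b))%N := grow b (size w).
have s_pos b : (0 < size (s b))%N := leq_ltn_trans (leq0n _) (w_s b).
have [g [T near]] := parikh2_near_line.
(* Block starts and occurrence counts at block starts are both linear in parikh2 k,
   which stays near a line; their ratio is therefore asymptotically constant. *)
pose ce := weight_col (fun bc => size (s bc.1)); pose cw := weight_col (block_occ s w).
have [Be start_near] := near ce; have [Bw occ_near] := near cw.
have start_eq k : (block_start s k)%:R = (parikh2 k *m ce) 0 0 by rewrite parikh2_weight.
have occ_eq k : (occ_prefix w (block_start s k))%:R = (parikh2 k *m cw) 0 0.
  by rewrite parikh2_weight occ_prefix_block_start // => b; apply: ltnW.
have gce_neq0 : g ce != 0.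
  apply/eqP => gce0; apply: (natr_unbounded (block_start_ge s_pos) (B := Be)) => k.
  by have := start_near k; rewrite gce0 mulr0 subr0 -start_eq normr_nat.
pose f := g cw / g ce.
have block_near k :
    `|(occ_prefix w (block_start s k))%:R - f * (block_start s k)%:R| <= Bw + `|f| * Be.
  have -> : (occ_prefix w (block_start s k))%:R - f * (block_start s k)%:R =
      ((parikh2 k *m cw) 0 0 - T k * g cw) - f * ((parikh2 k *m ce) 0 0 - T k * g ce).
    by rewrite occ_eq start_eq /f; field.
  apply: le_trans (ler_normB _ _) _; rewrite normrM.
  by apply: lerD => //; apply: ler_wpM2l.
pose L := (\max_b size (s b))%N.
exists f, (Bw + `|f| * Be + L%:R + `|f| * L%:R).
apply: (discrepancy_interpolate (P := block_start s)) => //.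
- by rewrite /block_start big_ord0.
- by move=> k; apply: (block_start_ge s_pos k.+1).
- by move=> k; rewrite block_startS leq_add2l; apply: (leq_bigmax (x k)).
- exact: occ_prefix_lipschitz.
Qed.

Lemma occ_factor_balanced w : exists K,
  forall n i i', (occ w (factor x i n) <= occ w (factor x i' n) + K)%N.
Proof.
have [f [D near]] := occ_prefix_near w.
have [K balanced] := bounded_discrepancy_balanced near.
exists K => n i i'; case: (leqP (size w) n) => [w_n | n_w].
  by have := balanced i i' (n - size w).+1; rewrite !occ_factor //; lia.
by rewrite occ_short // size_mkseq.
Qed.

End Pisot.

End FixedPoint.

(** * k-abelian complexity *)

Lemma kabP (A : finType) k (u v : seq A) :
  reflect (forall w : {l : 'I_k.+1 & l.-tuple A}, occ (tagged w) u = occ (tagged w) v)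
          (kab k u v).
Proof.
apply: (iffP forallP) => [kab_uv [l w] | occ_uv l].
  by have /forallP/(_ w)/eqP := kab_uv l.
apply/forallP => w; apply/eqP.
exact: (occ_uv (Tagged (fun l : 'I_k.+1 => l.-tuple A) w)).
Qed.

Lemma kab_complexity_bounded (A : finType) (x : nat -> A) k :
  (forall w : seq A, exists K,
     forall n i i', occ w (factor x i n) <= occ w (factor x i' n) + K) ->
  exists C, forall n, kab_complexity k x n <= C.
Proof.
move=> balanced; pose W := {l : 'I_k.+1 & l.-tuple A}.
have [Kw Kw_bal] := fin_all_exists (fun w : W => balanced (tagged w)).
pose K := \max_(w : W) Kw w.
exists #|{ffun W -> 'I_(K + K).+1}| => n; rewrite /kab_complexity; set F := factors x n.
have [-> | [u0 u0F]] := set_0Vmem F; first by rewrite imset0 cards0.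
have occ_near (v : n.-tuple A) (w : W) : v \in F ->
    occ (tagged w) v <= occ (tagged w) u0 + K /\
    occ (tagged w) u0 <= occ (tagged w) v + K.
  rewrite inE => /asboolP[i ->]; move: u0F; rewrite inE => /asboolP[i0 ->].
  have : Kw w <= K by apply: leq_bigmax.
  have := Kw_bal w n i i0; have := Kw_bal w n i0 i.
  rewrite /factor /K; lia.
(* A class is determined by the offsets of its occurrence counts from those of
   the fixed factor u0, which lie in [0, 2K]. *)
pose h (v : n.-tuple A) : {ffun W -> 'I_(K + K).+1} :=
  [ffun w : W => inord (occ (tagged w) v + K - occ (tagged w) u0)].
have h_eq (u v : n.-tuple A) : u \in F -> v \in F -> (h u == h v) = kab k u v.
  move=> uF vF; apply/eqP/kabP => [huv w | occ_uv]; last first.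
    by apply/ffunP => w; rewrite !ffunE occ_uv.
  have := congr1 (fun g : {ffun W -> 'I_(K + K).+1} => val (g w)) huv.
  rewrite /= !ffunE.
  have [? ?] := occ_near u w uF; have [? ?] := occ_near v w vF.
  by rewrite !inordK; lia.
pose cl (phi : {ffun W -> 'I_(K + K).+1}) := [set v in F | phi == h v].
apply: leq_trans (_ : #|cl @: setT| <= _).
  apply/subset_leq_card/subsetP => _ /imsetP[u uF ->]; apply/imsetP; exists (h u) => //.
  apply/setP => v; rewrite !inE; apply: andb_id2l => vF.
  by rewrite h_eq // inE.
by rewrite (leq_trans (leq_imset_card _ _)) ?cardsT.
Qed.

Unset Implicit Arguments.

Theorem theorem39 (A : finType) (tau : A -> seq A) (a : A) (x : nat -> A) :
  primitive tau ->
  prolongable tau a ->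
  is_fixed_point tau a x ->
  ultimately_pisot (incmx2 algC tau x) ->
  forall k : nat, (1 <= k)%N ->
    exists C : nat, forall n : nat, (kab_complexity k x n <= C)%N.
Proof.
move=> tau_primitive tau_prolongable x_fixed [m [th [th_pisot M2_char]]] k _.
apply: kab_complexity_bounded => w.
exact: (occ_factor_balanced (primitive_nonerasing tau_primitive) tau_prolongable
  x_fixed tau_primitive th_pisot M2_char).
Qed.
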